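(* Let $K$ be a field of characteristic $\neq2$, $\zeta_4$ a primitive fourth root of unity in a fixed algebraic closure of $K$, and let $a,b\in K^*$ with $a/b\in(K^* )^2$. Choose fourth roots of $a$ and $b$ and let $a,b:G_K\to\mathbb Z/4$ be the corresponding Kummer cocycles (via $\zeta_4$). Then $\binom a2+\binom b2:G_K\to\mathbb Z/2$ equals the cocycle $\{\sqrt b/\sqrt a\}:G_K\to\mathbb Z/2$, where $\sqrt b,\sqrt a$ are the squares of the chosen fourth roots of $b,a$.
   Context: The Kummer cocycle of $a$ is $g\mapsto a(g)$ with $g(\sqrt[4]a)/\sqrt[4]a=\zeta_4^{a(g)}$; $\binom a2$ is $g\mapsto\binom{a(g)}2\bmod2$ (well defined for $a(g)\in\mathbb Z/4$). For $z\in K^*$, $\{z\}:G_K\to\mathbb Z/2$ is the mod-$2$ Kummer cocycle $g\mapsto g(\sqrt z)/\sqrt z\in\mu_2=\mathbb Z/2$. *)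

From HB Require Import structures.
From mathcomp Require Import all_boot all_order all_algebra.
Set Implicit Arguments. Unset Strict Implicit. Unset Printing Implicit Defensive.
Import Order.TTheory GRing.Theory Num.Theory.
Local Open Scope ring_scope.

(* Together with L being
   algebraically closed, L is an algebraic closure of K, and G_K is modelled by
   the ring automorphisms of L fixing iota(K). *)
Definition algebraic_over (K L : fieldType) (iota : {rmorphism K -> L}) : Prop :=
  forall x : L, exists p : {poly K}, p != 0 /\ root (map_poly iota p) x.

(* Value of the mod-4 Kummer cocycle of (a fourth root) alpha at g:
   i in {0,1,2,3} with g(alpha)/alpha = zeta^i. *)
Definition kummer4 (L : fieldType) (zeta alpha : L) (g : L -> L) (i : nat) : Prop :=
  (i < 4)%N /\ g alpha = zeta ^+ i * alpha.

(* Value of the mod-2 Kummer cocycle {z} at g, where r is a square root of z: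
   g(r)/r = (-1)^e. *)
Definition kummer2 (L : fieldType) (r : L) (g : L -> L) (e : nat) : Prop :=
  g r = (-1) ^+ e * r.

(* Put t := beta / alpha.  Then t ^+ 4 = b / a = (c^-1) ^+ 2 for some c in K, so
   t ^+ 2 = +- c^-1 lies in K and is fixed by g.  On the other hand
   g t = zeta ^+ (j - i) * t, so zeta ^+ (2 (j - i)) = 1 forces i = j (mod 2), and then
   zeta ^+ (j - i) = +-1 is exactly (-1) ^+ ('C(i, 2) + 'C(j, 2)).  Finally r = +- t. *)

From HB Require Import structures.
From mathcomp Require Import all_boot all_order all_algebra.
Set Implicit Arguments. Unset Strict Implicit. Unset Printing Implicit Defensive.
Import Order.TTheory GRing.Theory Num.Theory.
Local Open Scope ring_scope.

Lemma prim4_root_sqr (R : idomainType) (z : R) :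
  4.-primitive_root z -> z ^+ 2 = -1.
Proof.
move=> z_prim; have : (z ^+ 2) ^+ 2 == 1 by rewrite -exprM -(prim_order_dvd z_prim).
by rewrite sqrf_eq1 -(prim_order_dvd z_prim) => /predU1P[|/eqP].
Qed.

Lemma odd_eq_of_signr_eq (R : nzRingType) (m n : nat) :
  (2%:R : R) != 0 -> (-1) ^+ m = (-1) ^+ n :> R -> odd m = odd n.
Proof.
move=> two_neq0; rewrite -signr_odd -(signr_odd _ n).
have sign_neq : (-1 : R) != 1 by rewrite -subr_eq0 -opprD oppr_eq0 -mulr2n.
by case: (odd m); case: (odd n) => //= /eqP;
  rewrite ?(negPf sign_neq) // eq_sym (negPf sign_neq).
Qed.

Section PrimitiveFourthRoot.

Variables (R : idomainType) (z : R).
Hypothesis z_prim : 4.-primitive_root z.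

(* z ^+ n = (-1) ^+ (n %/ 2) * z ^+ (odd n), and n %/ 2 = 'C(n, 2) mod 2 *)
Lemma prim4_root_expr n : z ^+ n = (-1) ^+ 'C(n, 2) * z ^+ odd n.
Proof.
elim: n => [|n IHn]; first by rewrite bin0n expr0 mulr1.
rewrite exprS IHn binS bin1 exprD -[(-1) ^+ n]signr_odd /=.
case: (odd n) => /=; rewrite ?expr0 ?expr1 ?mulr1 mulrC // -mulrA -expr2.
by rewrite prim4_root_sqr.
Qed.

Lemma prim4_root_expr_binomial i j :
  odd i = odd j -> z ^+ j = (-1) ^+ ('C(i, 2) + 'C(j, 2)) * z ^+ i.
Proof.
move=> odd_ij; rewrite addnC exprD -mulrA [z ^+ i]prim4_root_expr signrMK odd_ij.
exact: prim4_root_expr.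
Qed.

End PrimitiveFourthRoot.

Section KummerQuotient.

Variables (L : fieldType) (g : {rmorphism L -> L}).

Lemma rmorph_fixed_of_sqr_eq (x y : L) :
  x ^+ 2 = y ^+ 2 -> g y = y -> g x = x.
Proof.
by move=> /eqP; rewrite eqf_sqr => /predU1P[-> //|/eqP ->] gy; rewrite rmorphN gy.
Qed.

Lemma rmorph_sign_of_sqr_eq (x y : L) (e : nat) :
  x ^+ 2 = y ^+ 2 -> g y = (-1) ^+ e * y -> g x = (-1) ^+ e * x.
Proof.
by move=> /eqP; rewrite eqf_sqr => /predU1P[-> //|/eqP ->] gy; rewrite rmorphN gy mulrN.
Qed.

Lemma kummer4_quotient (zeta alpha beta : L) (i j : nat) :
  alpha != 0 -> kummer4 zeta alpha g i -> kummer4 zeta beta g j ->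
  g (beta / alpha) * zeta ^+ i = zeta ^+ j * (beta / alpha).
Proof.
move=> alpha_neq0 [_ g_alpha] [_ g_beta].
apply: (mulIf alpha_neq0); rewrite -mulrA -g_alpha -rmorphM /= mulfVK //.
by rewrite g_beta -mulrA mulfVK.
Qed.

End KummerQuotient.

Theorem lemma12p6 (K : fieldType) (L : closedFieldType)
    (iota : {rmorphism K -> L}) (Lalg : algebraic_over iota)
    (char_ne2 : (2%:R : K) != 0)
    (zeta : L) (hzeta : 4.-primitive_root zeta)
    (a b : K) (ha : a != 0) (hb : b != 0)
    (hab : exists c : K, a / b = c ^+ 2)
    (alpha beta : L) (halpha : alpha ^+ 4 = iota a) (hbeta : beta ^+ 4 = iota b)
    (g : {rmorphism L -> L}) (hg : bijective g)
    (hgK : forall x : K, g (iota x) = iota x)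
    (i j : nat) (hi : kummer4 zeta alpha g i) (hj : kummer4 zeta beta g j)
    (r : L) (hr : r ^+ 2 = beta ^+ 2 / alpha ^+ 2) :
  kummer2 r g (('C(i, 2) + 'C(j, 2)) %% 2)%N.
Proof.
have [c def_c] := hab.
have alpha_neq0 : alpha != 0.
  by apply: contraNneq ha => alpha0; rewrite -(fmorph_eq0 iota) -halpha alpha0 expr0n.
have zeta_neq0 : zeta != 0.
  apply/eqP => zeta0; move: (prim_expr_order hzeta).
  by rewrite zeta0 expr0n => /eqP; rewrite eq_sym oner_eq0.
have beta_neq0 : beta != 0.
  by apply: contraNneq hb => beta0; rewrite -(fmorph_eq0 iota) -hbeta beta0 expr0n.
have two_neq0 : (2%:R : L) != 0 by rewrite -(rmorph_nat iota) fmorph_eq0.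
set t := beta / alpha; have t_neq0 : t != 0 by rewrite mulf_neq0 ?invr_eq0.
have g_tt : g (t ^+ 2) = t ^+ 2.
  apply: (rmorph_fixed_of_sqr_eq (y := iota c^-1)) (hgK _).
  by rewrite -exprM expr_div_n halpha hbeta -rmorphXn exprVn -def_c invf_div fmorph_div.
have g_t := kummer4_quotient alpha_neq0 hi hj; rewrite -/t in g_t.
have odd_ij : odd i = odd j.
  apply: (odd_eq_of_signr_eq two_neq0); rewrite -(prim4_root_sqr hzeta) -!exprM.
  apply: (mulIf (expf_neq0 2 t_neq0)); rewrite -[in LHS]g_tt rmorphXn mulrC.
  by rewrite !(mulnC 2) !exprM -!exprMn g_t mulrC.
apply: (rmorph_sign_of_sqr_eq (y := t)); first by rewrite hr expr_div_n.
apply: (mulIf (expf_neq0 i zeta_neq0)).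
rewrite g_t (prim4_root_expr_binomial hzeta odd_ij) modn2 signr_odd.
by rewrite mulrAC -mulrA mulrC.
Qed.
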